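(* Let $d=e_1+\varepsilon\gamma$ with $\gamma\in\Gamma$ and $\varepsilon\ge0$ sufficiently small (orientations chosen so that $Vd\ge0$), and let $I^*(d)$ be its hyperplane index set. Then $$A_{I^*(d)}e_1=(1-\lambda)e_1+\frac{\lambda}{n}e.$$
   Context: $\mathcal G$ is a simple connected oriented graph with $n$ nodes, $m$ edges, incidence matrix $C$, PTDF matrix $V=C(C^TC)^+$; $e$ all-ones, $J=ee^T$, $\lambda\in(0,1)$. $g^*(d)$ is the unique minimizer of $\frac12\sum_ig_i^2$ over $g\ge0$ with $e^Tg=e^Td$ and $-\lambda|Vd|\le V(d-g)\le\lambda|Vd|$. $\Gamma=\{\gamma\in\mathbb R^n:\gamma_1=0,\gamma\ge0,e^T\gamma=1\}$. With hyperplanes $H_0=\{g:e^Tg=e^Td\}$, $H_i=\{g:(Vg)_i=(1-\lambda)(Vd)_i\}$, $H_{m+i}=\{g:(Vg)_i=(1+\lambda)(Vd)_i\}$, $I^*(d)=\{j:g^*(d)\in H_j\}$. For $I\subseteq\{0,\dots,2m\}$, with $I_1=I\cap\{1,\dots,m\}$, $I_2=I\cap\{m+1,\dots,2m\}$, $V_{I_1}$ the rows $j\in I_1$ of $V$ and $V_{I_2}$ the rows $k-m$, $k\in I_2$: $A_I=\frac1nJ+[V_{I_1}^T\ V_{I_2}^T]\big([V_{I_1};V_{I_2}][V_{I_1}^T\ V_{I_2}^T]\big)^+[(1-\lambda)V_{I_1};(1+\lambda)V_{I_2}]$ (so that $g^*(d)=A_{I^*(d)}d$). *)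

From HB Require Import structures.
From mathcomp Require Import all_boot all_order all_algebra.
From mathcomp Require Import boolp reals.
From Stdlib Require Import ClassicalEpsilon.
Set Implicit Arguments. Unset Strict Implicit. Unset Printing Implicit Defensive.
Import Order.TTheory GRing.Theory Num.Theory.
Local Open Scope ring_scope.

Section Defs.
Variable R : realType.

Definition is_MP_pinv (p q : nat) (A : 'M[R]_(p, q)) (X : 'M[R]_(q, p)) : Prop :=
  [/\ A *m X *m A = A, X *m A *m X = X,
      (A *m X)^T = A *m X & (X *m A)^T = X *m A].

Definition pinv (p q : nat) (A : 'M[R]_(p, q)) : 'M[R]_(q, p) :=
  epsilon (inhabits 0) (is_MP_pinv A).

(* An oriented graph on nodes 'I_n with m edges; edge k goes from tl k to hd k. *)
Definition adjacent (n m : nat) (tl hd : 'I_m -> 'I_n) : rel 'I_n :=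
  fun i j => [exists k, ((tl k == i) && (hd k == j)) || ((tl k == j) && (hd k == i))].

Definition simple_connected_graph (n m : nat) (tl hd : 'I_m -> 'I_n) : Prop :=
  [/\ (forall k, tl k != hd k),
      (forall k k', [set tl k; hd k] = [set tl k'; hd k'] -> k = k')
    & (forall i j, connect (adjacent tl hd) i j)].

Definition incidence (n m : nat) (tl hd : 'I_m -> 'I_n) : 'M[R]_(m, n) :=
  \matrix_(k < m, i < n) ((i == tl k)%:R - (i == hd k)%:R).

Definition PTDF (n m : nat) (C : 'M[R]_(m, n)) : 'M[R]_(m, n) :=
  C *m pinv (C^T *m C).

Definition absv (p : nat) (x : 'cV[R]_p) : 'cV[R]_p := map_mx Num.norm x.

Definition sumv (p : nat) (x : 'cV[R]_p) : R := \sum_i x i 0.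

Definition feasible (n m : nat) (V : 'M[R]_(m, n)) (lam : R) (d g : 'cV[R]_n) : Prop :=
  [/\ (forall i, 0 <= g i 0), sumv g = sumv d &
      forall k, - (lam * absv (V *m d) k 0) <= (V *m (d - g)) k 0 <= lam * absv (V *m d) k 0].

Definition objective (n : nat) (g : 'cV[R]_n) : R := 2^-1 * \sum_i (g i 0) ^+ 2.

Definition is_gstar (n m : nat) (V : 'M[R]_(m, n)) (lam : R) (d g : 'cV[R]_n) : Prop :=
  feasible V lam d g /\ forall h, feasible V lam d h -> objective g <= objective h.

Definition gstar (n m : nat) (V : 'M[R]_(m, n)) (lam : R) (d : 'cV[R]_n) : 'cV[R]_n :=
  epsilon (inhabits 0) (is_gstar V lam d).

Definition in_H (n m : nat) (V : 'M[R]_(m, n)) (lam : R) (d g : 'cV[R]_n) (j : nat) : Prop :=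
  if j == 0%N then sumv g = sumv d
  else if (j <= m)%N then
    exists k : 'I_m, val k = j.-1 /\ (V *m g) k 0 = (1 - lam) * (V *m d) k 0
  else exists k : 'I_m, val k = (j - m).-1 /\ (V *m g) k 0 = (1 + lam) * (V *m d) k 0.

Definition Istar (n m : nat) (V : 'M[R]_(m, n)) (lam : R) (d : 'cV[R]_n) : {set 'I_(2 * m).+1} :=
  [set j : 'I_(2 * m).+1 | `[< in_H V lam d (gstar V lam d) j >] ].

(* I_1 (shifted to edge indices 0..m-1) and I_2 (shifted by m+1) *)
Definition I1of (m : nat) (I : {set 'I_(2 * m).+1}) : {set 'I_m} :=
  [set k : 'I_m | (inord k.+1 : 'I_(2 * m).+1) \in I].
Definition I2of (m : nat) (I : {set 'I_(2 * m).+1}) : {set 'I_m} :=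
  [set k : 'I_m | (inord (m + k.+1) : 'I_(2 * m).+1) \in I].

Definition rows_of (n m : nat) (V : 'M[R]_(m, n)) (S : {set 'I_m}) : 'M[R]_(#|S|, n) :=
  \matrix_(r < #|S|, j < n) V (enum_val r) j.

Definition A_I (n m : nat) (V : 'M[R]_(m, n)) (lam : R) (I : {set 'I_(2 * m).+1}) : 'M[R]_n :=
  let V1 := rows_of V (I1of I) in
  let V2 := rows_of V (I2of I) in
  let W := col_mx V1 V2 in
  let W' := col_mx ((1 - lam) *: V1) ((1 + lam) *: V2) in
  (n%:R)^-1 *: const_mx 1 + W^T *m pinv (W *m W^T) *m W'.

Definition unitv (n : nat) (i : 'I_n) : 'cV[R]_n := delta_mx i 0.

Definition in_Gamma (n : nat) (i1 : 'I_n) (gam : 'cV[R]_n) : Prop :=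
  [/\ gam i1 0 = 0, (forall i, 0 <= gam i 0) & sumv gam = 1].

End Defs.

From Pilot Require Import Defs.
From mathcomp Require Import all_boot all_order all_algebra.
From mathcomp Require Import all_classical all_reals all_analysis.
From mathcomp Require Import zify ring lra.
From Stdlib Require ClassicalEpsilon.
(* Re-imported so that [pinv] denotes the Moore-Penrose pseudoinverse again,
   not the preimage operator of the analysis library. *)
Import Defs.
Import Order.TTheory GRing.Theory Num.Theory.
Import numFieldNormedType.Exports.
Set Implicit Arguments. Unset Strict Implicit. Unset Printing Implicit Defensive.
Local Open Scope ring_scope.

(* For small [eps], the optimal dispatch [g*(d)] is within [O(sqrt eps)] of the proportional
   dispatch [(1 - lam) d + lam (1 + eps) / n e]: comparing objective values, the cross term is
   a sum over lines of injection times flow, and the only large injection, at node 1, only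
   feeds lines on which the PTDF flow [V e1] is nonpositive (discrete maximum principle).
   Hence [g*(d) > 0], no sign constraint is active, and [g*(d) = A_{I*(d)} d]; so
   [A_{I*(d)} e1 = g*(d) - eps A_{I*(d)} gam] is close to [(1 - lam) e1 + lam / n e].
   As [I] ranges over finitely many index sets, the deviation [A_I e1 - ((1 - lam) e1 +
   lam / n e)] is either zero or bounded away from zero, so it vanishes for small [eps]. *)

Lemma mulmx_tr_eq0 (R : realDomainType) (p q : nat) (K : 'M[R]_(p, q)) :
  K *m K^T = 0 -> K = 0.
Proof.
move=> /matrixP KKt0; apply/matrixP => i j; rewrite mxE.
have /eqP := KKt0 i i; rewrite !mxE.
under eq_bigr do rewrite mxE -expr2.
rewrite psumr_eq0; last by move=> k _; exact: sqr_ge0.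
by move=> /allP /(_ j (mem_index_enum _)); rewrite sqrf_eq0 => /eqP.
Qed.

Lemma gram_unitmx (R : realFieldType) (p q : nat) (F : 'M[R]_(p, q)) :
  row_full F -> F^T *m F \in unitmx.
Proof.
move=> fullF; rewrite -row_free_unit; apply: inj_row_free => v vFtF0.
have vFt0 : v *m F^T = 0.
  by apply: mulmx_tr_eq0; rewrite trmx_mul trmxK !mulmxA -(mulmxA v) vFtF0 mul0mx.
by apply: (row_free_inj (_ : row_free F^T)); rewrite ?vFt0 ?mul0mx // /row_free mxrank_tr.
Qed.

Section Pseudoinverse.
Variable R : realType.

Lemma is_MP_pinv_full_rank (p q r : nat) (F : 'M[R]_(p, r)) (G : 'M[R]_(r, q)) :
  row_full F -> row_free G -> exists X, is_MP_pinv (F *m G) X.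
Proof.
move=> fullF freeG.
have uM := gram_unitmx fullF.
have uN : G *m G^T \in unitmx.
  by have := @gram_unitmx _ _ _ G^T; rewrite trmxK; apply; rewrite /row_full mxrank_tr.
set M := F^T *m F in uM *; set N := G *m G^T in uN *.
have symM : M^T = M by rewrite /M trmx_mul trmxK.
have symN : N^T = N by rewrite /N trmx_mul trmxK.
exists (G^T *m invmx N *m invmx M *m F^T); split.
- rewrite !mulmxA -(mulmxA F G) -/N -(mulmxA F N) mulmxV // mulmx1.
  by rewrite -(mulmxA _ F^T F) -/M -(mulmxA F) mulVmx // mulmx1.
- rewrite !mulmxA -(mulmxA _ F^T F) -/M -(mulmxA _ (invmx M) M) mulVmx // mulmx1.
  by rewrite -(mulmxA _ G G^T) -/N -(mulmxA _ (invmx N) N) mulVmx // mulmx1.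
- rewrite !mulmxA -(mulmxA F G) -/N -(mulmxA F N) mulmxV // mulmx1.
  by rewrite !trmx_mul trmxK trmx_inv symM mulmxA.
- rewrite !mulmxA -(mulmxA _ F^T F) -/M -(mulmxA _ (invmx M) M) mulVmx // mulmx1.
  by rewrite !trmx_mul trmxK trmx_inv symN mulmxA.
Qed.

Lemma pinvP (p q : nat) (A : 'M[R]_(p, q)) : is_MP_pinv A (pinv A).
Proof.
apply: ClassicalEpsilon.epsilon_spec.
have := @is_MP_pinv_full_rank _ _ _ (col_base A) (row_base A) (col_base_full A) (row_base_free A).
by rewrite mulmx_base.
Qed.

Lemma mulmx_pinvK_sym (p : nat) (A : 'M[R]_p) : A^T = A -> A *m (A *m pinv A) = A.
Proof.
move=> symA; have [AXA _ AXsym _] := pinvP A.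
by rewrite -{1}symA -AXsym -trmx_mul AXA symA.
Qed.

Lemma pinv_sym_ker (p q : nat) (A : 'M[R]_p) (x : 'M[R]_(p, q)) :
  A^T = A -> A *m x = 0 -> pinv A *m x = 0.
Proof.
move=> symA Ax0; have [_ XAX AXsym _] := pinvP A.
have -> : pinv A = pinv A *m (pinv A)^T *m A.
  by rewrite -{1}XAX -mulmxA -AXsym trmx_mul symA mulmxA.
by rewrite -mulmxA Ax0 mulmx0.
Qed.

Lemma gram_pinvK (p q : nat) (W : 'M[R]_(p, q)) :
  W *m W^T *m pinv (W *m W^T) *m W = W.
Proof.
set S := W *m W^T; have [SYS _ _ _] := pinvP S.
set K := (S *m pinv S - 1%:M) *m W.
suff /mulmx_tr_eq0 : K *m K^T = 0.
  by rewrite /K mulmxBl mul1mx => /eqP; rewrite subr_eq0 => /eqP.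
rewrite /K trmx_mul mulmxA -(mulmxA _ W) -/S.
by rewrite mulmxBl SYS mul1mx subrr mul0mx.
Qed.

End Pseudoinverse.

Lemma mxDE (V : nmodType) (p q : nat) (A B : 'M[V]_(p, q)) i j :
  (A + B) i j = A i j + B i j.
Proof. by rewrite mxE. Qed.

Lemma mxNE (V : zmodType) (p q : nat) (A : 'M[V]_(p, q)) i j : (- A) i j = - A i j.
Proof. by rewrite mxE. Qed.

Lemma mxBE (V : zmodType) (p q : nat) (A B : 'M[V]_(p, q)) i j :
  (A - B) i j = A i j - B i j.
Proof. by rewrite !mxE. Qed.

Lemma mxZE (R : pzRingType) (p q : nat) (a : R) (A : 'M[R]_(p, q)) i j :
  (a *: A) i j = a * A i j.
Proof. by rewrite mxE. Qed.

Lemma const_mxE (T : Type) (p q : nat) (a : T) i j : (const_mx a : 'M[T]_(p, q)) i j = a.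
Proof. by rewrite mxE. Qed.

Section Dot.
Variables (R : realDomainType) (n : nat).
Implicit Types (x y z : 'cV[R]_n).

Definition dot x y : R := \sum_i x i 0 * y i 0.

Lemma dotE x y : dot x y = (x^T *m y) 0 0.
Proof. by rewrite mxE; apply: eq_bigr => i _; rewrite mxE. Qed.

Lemma dotC x y : dot x y = dot y x.
Proof. by apply: eq_bigr => i _; rewrite mulrC. Qed.

Lemma dotDl x y z : dot (x + y) z = dot x z + dot y z.
Proof. by rewrite /dot -big_split; apply: eq_bigr => i _; rewrite mxE mulrDl. Qed.

Lemma dotDr x y z : dot x (y + z) = dot x y + dot x z.
Proof. by rewrite dotC dotDl !(dotC x). Qed.

Lemma dotZl a x y : dot (a *: x) y = a * dot x y.
Proof. by rewrite /dot mulr_sumr; apply: eq_bigr => i _; rewrite mxE mulrA. Qed.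

Lemma dotBl x y z : dot (x - y) z = dot x z - dot y z.
Proof. by rewrite dotDl -scaleN1r dotZl mulN1r. Qed.

Lemma dotBr x y z : dot x (y - z) = dot x y - dot x z.
Proof. by rewrite dotC dotBl !(dotC x). Qed.

Lemma dotZr a x y : dot x (a *: y) = a * dot x y.
Proof. by rewrite dotC dotZl dotC. Qed.

Lemma dot_sqrD x y : dot (x + y) (x + y) = dot x x + 2 * dot x y + dot y y.
Proof. by rewrite dotDl !dotDr (dotC y x); ring. Qed.

Lemma dot0l x : dot 0 x = 0.
Proof. by rewrite /dot big1 // => i _; rewrite mxE mul0r. Qed.

Lemma dot0r x : dot x 0 = 0.
Proof. by rewrite dotC dot0l. Qed.

Lemma dot_ge0 x : 0 <= dot x x.
Proof. by apply: sumr_ge0 => i _; rewrite -expr2 sqr_ge0. Qed.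

Lemma dot_eq0 x : dot x x = 0 -> x = 0.
Proof.
move=> /eqP; rewrite psumr_eq0 => [/allP xx0|i _]; last by rewrite -expr2 sqr_ge0.
apply/matrixP => i j; rewrite ord1 mxE.
by have /(_ (mem_index_enum i)) := xx0 i; rewrite -expr2 sqrf_eq0 => /eqP.
Qed.

Lemma sqr_le_dot x i : x i 0 ^+ 2 <= dot x x.
Proof.
rewrite /dot (bigD1 i) //= -expr2 lerDl.
by apply: sumr_ge0 => j _; rewrite -expr2 sqr_ge0.
Qed.

End Dot.

Lemma dot_mulmx (R : realDomainType) (p n : nat) (M : 'M[R]_(p, n)) (u : 'cV[R]_p)
    (x : 'cV[R]_n) :
  dot (M^T *m u) x = dot u (M *m x).
Proof. by rewrite !dotE trmx_mul trmxK mulmxA. Qed.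

Section Vectors.
Variables (R : realType) (n : nat).
Implicit Types (x y : 'cV[R]_n).

Local Notation e := (const_mx 1 : 'cV[R]_n).

Lemma objectiveE x : objective x = 2^-1 * dot x x.
Proof. by congr (_ * _); apply: eq_bigr => i _; rewrite expr2. Qed.

Lemma sumvE x : sumv x = dot e x.
Proof. by apply: eq_bigr => i _; rewrite mxE mul1r. Qed.

Lemma sumvD x y : sumv (x + y) = sumv x + sumv y.
Proof. by rewrite !sumvE dotDr. Qed.

Lemma sumvB x y : sumv (x - y) = sumv x - sumv y.
Proof. by rewrite !sumvE dotBr. Qed.

Lemma sumvZ a x : sumv (a *: x) = a * sumv x.
Proof. by rewrite !sumvE dotZr. Qed.

Lemma sumv_const : sumv e = n%:R.
Proof. by rewrite /sumv; under eq_bigr do rewrite mxE; rewrite sumr_const card_ord. Qed.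

Lemma absvE x i : absv x i 0 = `|x i 0|.
Proof. by rewrite mxE. Qed.

Lemma unitvE (i0 i : 'I_n) : unitv R i0 i 0 = (i == i0)%:R.
Proof. by rewrite mxE andbT. Qed.

Lemma sumv_unitv (i0 : 'I_n) : sumv (unitv R i0) = 1.
Proof.
rewrite /sumv (bigD1 i0) //= unitvE eqxx big1 ?addr0 // => i /negbTE.
by rewrite unitvE => ->.
Qed.

Lemma const_mx_mulmx x : (const_mx 1 : 'M[R]_n) *m x = sumv x *: e.
Proof.
apply/matrixP => i j; rewrite ord1 !mxE mulr1.
by apply: eq_bigr => k _; rewrite mxE mul1r.
Qed.

End Vectors.

Section Laplacian.
Variables (R : realType) (n m : nat) (tl hd : 'I_m -> 'I_n).

Local Notation C := (incidence R tl hd).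
Local Notation L := (C^T *m C).
Local Notation e := (const_mx 1 : 'cV[R]_n).

Lemma incidence_mulE (x : 'cV[R]_n) k : (C *m x) k 0 = x (tl k) 0 - x (hd k) 0.
Proof.
have pick a : \sum_i ((i == a)%:R * x i 0) = x a 0.
  by rewrite (bigD1 a) //= eqxx mul1r big1 ?addr0 // => i /negbTE ->; rewrite mul0r.
by rewrite mxE; under eq_bigr do rewrite mxE mulrBl; rewrite sumrB !pick.
Qed.

Lemma incidence_const : C *m e = 0.
Proof. by apply/matrixP => k j; rewrite ord1 incidence_mulE !mxE subrr. Qed.

Lemma laplacian_sym : L^T = L.
Proof. by rewrite trmx_mul trmxK. Qed.

Lemma pinv_laplacian_const : pinv L *m e = 0.
Proof.
apply: pinv_sym_ker; first exact: laplacian_sym.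
by rewrite -mulmxA incidence_const mulmx0.
Qed.

Lemma PTDF_const : PTDF C *m e = 0.
Proof. by rewrite -mulmxA pinv_laplacian_const mulmx0. Qed.

Lemma laplacian_ker (x : 'cV[R]_n) : L *m x = 0 -> C *m x = 0.
Proof.
move=> Lx0; rewrite -[C *m x]trmxK; apply/eqP; rewrite trmx_eq0; apply/eqP.
by apply: mulmx_tr_eq0; rewrite trmxK trmx_mul -mulmxA (mulmxA C^T) Lx0 mulmx0.
Qed.

Lemma laplacian_mulE (x : 'cV[R]_n) i :
  (L *m x) i 0 = \sum_k C k i * (x (tl k) 0 - x (hd k) 0).
Proof. by rewrite -mulmxA mxE; apply: eq_bigr => k _; rewrite mxE incidence_mulE. Qed.

Hypothesis G : simple_connected_graph tl hd.

Lemma incidence_ker (x : 'cV[R]_n) i : C *m x = 0 -> x = x i 0 *: e.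
Proof.
move=> /matrixP Cx0; apply/matrixP => j k; rewrite ord1 !mxE mulr1.
case: G => _ _ /(_ i j) /connectP [p]; elim: p i => [|a p IHp] i /=.
  by move=> _ ->.
move=> /andP [/existsP [l ial] pa] j_last; rewrite (IHp a pa j_last).
have /eqP := Cx0 l 0; rewrite incidence_mulE mxE subr_eq0 => /eqP.
by case/orP: ial => /andP [/eqP -> /eqP ->].
Qed.

Lemma laplacian_pinv_mulE (n_gt0 : (0 < n)%N) (x : 'cV[R]_n) :
  L *m pinv L *m x = x - (sumv x / n%:R) *: e.
Proof.
set y := x - L *m pinv L *m x.
have Cy0 : C *m y = 0.
  apply: laplacian_ker; rewrite mulmxBr mulmxA mulmx_pinvK_sym ?subrr //.
  exact: laplacian_sym.
have sumy : sumv y = sumv x.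
  have [_ _ LXsym _] := pinvP L.
  rewrite sumvB [sumv (_ *m x)]sumvE -dot_mulmx LXsym -[L *m _ *m e]mulmxA.
  rewrite pinv_laplacian_const.
  by rewrite mulmx0 dot0l subr0.
have n0 : (n%:R : R) != 0 by rewrite pnatr_eq0 -lt0n.
have y_const := incidence_ker (Ordinal n_gt0) Cy0.
have -> : sumv x / n%:R = y (Ordinal n_gt0) 0.
  by rewrite -sumy {1}y_const sumvZ sumv_const mulfK.
by rewrite -y_const /y opprB addrC subrK.
Qed.

Lemma dot_incidence_PTDF (n_gt0 : (0 < n)%N) (x y : 'cV[R]_n) :
  sumv x = 0 -> dot (C *m y) (PTDF C *m x) = dot y x.
Proof.
move=> sumx0; rewrite dotC -dot_mulmx /PTDF !mulmxA laplacian_pinv_mulE //.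
by rewrite sumx0 mul0r scale0r subr0 dotC.
Qed.

(* Discrete maximum principle: [L *m th = unitv i0 - e / n] is negative off [i0], so
   [th] cannot attain its maximum there. *)
Lemma pinv_laplacian_unitv_max (i0 j : 'I_n) :
  (pinv L *m unitv R i0) j 0 <= (pinv L *m unitv R i0) i0 0.
Proof.
set th := pinv L *m unitv R i0.
have n_gt0 : (0 < n)%N by apply: leq_ltn_trans (ltn_ord i0).
have Lth : L *m th = unitv R i0 - n%:R^-1 *: e.
  by rewrite /th mulmxA laplacian_pinv_mulE // sumv_unitv div1r.
have [j0 _ th_max] := @arg_maxP _ R _ i0 predT (fun j => th j 0) isT.
suff -> : i0 = j0 by apply: th_max.
apply: contraTeq isT => /negbTE i0j0.
have Lth_j0 : (L *m th) j0 0 = - n%:R^-1.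
  by rewrite Lth !mxE eq_sym i0j0 /= mulr1 sub0r.
have : 0 <= (L *m th) j0 0.
  rewrite laplacian_mulE; apply: sumr_ge0 => k _; rewrite mxE.
  have [tlk _ _] := G.
  case: (eqVneq j0 (tl k)) => [tl_k|_]; case: (eqVneq j0 (hd k)) => [hd_k|_].
  - by have := tlk k; rewrite -tl_k -hd_k eqxx.
  - by rewrite -tl_k subr0 mul1r subr_ge0; apply: th_max.
  - by rewrite -hd_k sub0r mulN1r oppr_ge0 subr_le0; apply: th_max.
  - by rewrite subrr mul0r.
by rewrite Lth_j0 oppr_ge0 invr_le0 leNgt ltr0n n_gt0.
Qed.

Lemma PTDF_unitv_hd_le0 (i0 : 'I_n) k :
  hd k = i0 -> (PTDF C *m unitv R i0) k 0 <= 0.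
Proof.
move=> hd_k; rewrite -mulmxA incidence_mulE hd_k subr_le0.
exact: pinv_laplacian_unitv_max.
Qed.

End Laplacian.

Section Minimizer.
Variables (R : realType) (n m : nat) (V : 'M[R]_(m, n)) (lam : R) (d : 'cV[R]_n).
Local Open Scope classical_set_scope.

Lemma lincomb_continuous (c : 'I_n -> R) :
  continuous (fun u : 'rV[R]_n => \sum_j c j * u ord0 j).
Proof.
apply: continuous_big => [|j _]; first exact: add_continuous.
by move=> u; apply: continuousM; [exact: cst_continuous | exact: coord_continuous].
Qed.

Let box k := lam * absv (V *m d) k 0.

Lemma feasible_trE (u : 'rV[R]_n) : feasible V lam d u^T <->
  [/\ forall i, 0 <= u ord0 i, \sum_j 1 * u ord0 j = sumv d &
      forall k, (V *m d) k 0 - box k <= \sum_j V k j * u ord0 j <= (V *m d) k 0 + box k].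
Proof.
have Vu k : (V *m u^T) k 0 = \sum_j V k j * u ord0 j.
  by rewrite mxE; apply: eq_bigr => j _; rewrite mxE.
have sumu : sumv u^T = \sum_j 1 * u ord0 j.
  by apply: eq_bigr => j _; rewrite mxE mul1r.
split=> [[u_ge0 sumu_d u_box]|[u_ge0 sumu_d u_box]]; split.
- by move=> i; have := u_ge0 i; rewrite mxE.
- by rewrite -sumu.
- by move=> k; have := u_box k; rewrite mulmxBr mxBE Vu -/(box k) => /andP [? ?];
    apply/andP; split; lra.
- by move=> i; rewrite mxE.
- by rewrite sumu.
- by move=> k; have := u_box k; rewrite mulmxBr mxBE Vu -/(box k) => /andP [? ?];
    apply/andP; split; lra.
Qed.

Lemma feasible_compact : compact [set u : 'rV[R]_n | feasible V lam d u^T].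
Proof.
set F := [set u | _].
have F_sub : F `<=` [set u : 'rV[R]_n | forall i, `[0, sumv d]%classic (u ord0 i)].
  move=> u /= /(iffLR (feasible_trE u)) [u_ge0 sumu_d _] i; rewrite /= in_itv /= u_ge0 -sumu_d.
  rewrite (bigD1 i) //= mul1r lerDl; apply: sumr_ge0 => j _.
  by rewrite mul1r u_ge0.
apply: (subclosed_compact _ _ F_sub); last first.
  by apply: (@rV_compact _ _ (fun=> `[0, sumv d]%classic)) => i; exact: segment_compact.
have -> : F = \bigcap_(i in [set: 'I_n]) [set u | 0 <= u ord0 i] `&`
    [set u | \sum_j 1 * u ord0 j = sumv d] `&`
    \bigcap_(k in [set: 'I_m]) ([set u | (V *m d) k 0 - box k <= \sum_j V k j * u ord0 j]
      `&` [set u | \sum_j V k j * u ord0 j <= (V *m d) k 0 + box k]).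
  apply/seteqP; split => u /=.
    move=> /(iffLR (feasible_trE u)).
    case=> u_ge0 sumu_d u_box; split; first by split=> // i _; apply: u_ge0.
    by move=> k _; have /andP [lo hi] := u_box k; split.
  case=> [[u_ge0 sumu_d] u_box]; apply/(iffRL (feasible_trE u)); split=> [i|//|k].
    exact: u_ge0.
  by have [/= lo hi] := u_box k I; apply/andP.
have preim_closed (f : 'rV[R]_n -> R) (A : set R) :
    continuous f -> closed A -> closed [set u | A (f u)].
  by move=> f_cont A_closed; exact: (proj1 (continuous_closedP f) f_cont A A_closed).
apply: closedI; first apply: closedI.
- apply: closed_bigI => i _; apply: (preim_closed (fun u => u ord0 i) [set x | 0 <= x]).
    exact: coord_continuous.
  exact: closed_ge.
- by apply: (preim_closed _ [set x | x = sumv d]); [exact: lincomb_continuous | exact: closed_eq].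
- apply: closed_bigI => k _; apply: closedI.
    by apply: (preim_closed _ [set x | _ <= x]); [exact: lincomb_continuous | exact: closed_ge].
  by apply: (preim_closed _ [set x | x <= _]); [exact: lincomb_continuous | exact: closed_le].
Qed.

Lemma gstar_spec : (exists h, feasible V lam d h) -> is_gstar V lam d (gstar V lam d).
Proof.
move=> [h0 feas_h0]; apply: ClassicalEpsilon.epsilon_spec.
set F := [set u : 'rV[R]_n | feasible V lam d u^T].
have F0 : F !=set0 by exists h0^T; rewrite /F /= trmxK.
have obj_cont : {within F, continuous (fun u : 'rV[R]_n => \sum_j u ord0 j * u ord0 j)}.
  apply: continuous_subspaceT; apply: continuous_big => [|j _]; first exact: add_continuous.
  by move=> u; apply: continuousM; exact: coord_continuous.
have [c Fc c_min] := compact_EVT_min F0 feasible_compact obj_cont.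
exists c^T; split=> [|h feas_h]; first by move: Fc; rewrite inE.
have := c_min h^T; rewrite inE /F /= trmxK => /(_ feas_h) c_le.
rewrite /objective ler_pM2l ?invr_gt0 ?ltr0n //.
by move: c_le; congr (_ <= _); apply: eq_bigr => j _; rewrite !mxE expr2.
Qed.

End Minimizer.

Lemma exists_small_scale (R : realFieldType) (T : finType) (a b : T -> R) :
  (forall i, 0 < a i) -> exists t : R, 0 < t <= 1 /\ forall i, t * `|b i| < a i.
Proof.
move=> a_gt0; set S := \sum_i `|b i| / a i.
have S_ge0 i : 0 <= `|b i| / a i by rewrite divr_ge0 // ltW.
have S1_gt0 : 0 < 1 + S by rewrite ltr_pwDl // sumr_ge0.
exists (1 + S)^-1; split.
  by rewrite invr_gt0 S1_gt0 invf_le1 // lerDl sumr_ge0.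
move=> i; rewrite mulrC -ltr_pdivlMr ?invr_gt0 // invrK -ltr_pdivrMl // mulrC.
apply: le_lt_trans (_ : S < 1 + S); last by rewrite ltrDr ltr01.
by rewrite /S (bigD1 i) //= lerDl sumr_ge0.
Qed.

(* Uses [0^-1 = 0]: the vanishing values contribute nothing to the sum. *)
Lemma exists_gap (R : realFieldType) (T : finType) (f : T -> R) :
  exists2 del : R, 0 < del & forall p, f p != 0 -> del <= `|f p|.
Proof.
set S := \sum_p `|f p|^-1.
have S_ge0 : 0 <= S by apply: sumr_ge0 => p _; rewrite invr_ge0.
exists (1 + S)^-1; first by rewrite invr_gt0 ltr_wpDr.
move=> p fp0; have fp_gt0 : 0 < `|f p| by rewrite normr_gt0.
have : `|f p|^-1 <= S.
  by rewrite /S (bigD1 p) //= lerDl; apply: sumr_ge0 => q _; rewrite invr_ge0.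
by rewrite -[`|f p|]invrK lef_pV2 ?posrE ?invr_gt0 ?ltr_wpDr //; lra.
Qed.

Section Perturbation.
Variables (R : realType) (n m : nat) (V : 'M[R]_(m, n)) (lam : R) (d : 'cV[R]_n).

Definition box_strict (g : 'cV[R]_n) k :=
  - (lam * absv (V *m d) k 0) < (V *m (d - g)) k 0 < lam * absv (V *m d) k 0.

Lemma feasible_perturb (g z : 'cV[R]_n) :
  feasible V lam d g -> (forall i, 0 < g i 0) -> sumv z = 0 ->
  (forall k, (V *m z) k 0 != 0 -> box_strict g k) ->
  exists t : R, 0 < t <= 1 /\ feasible V lam d (g - t *: z).
Proof.
move=> [_ sumg g_box] g_gt0 sumz0 z_strict.
set a := fun k => lam * absv (V *m d) k 0.
set u := fun k => (V *m (d - g)) k 0.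
pose slack k := if (V *m z) k 0 == 0 then 1 else Num.min (a k - u k) (u k + a k).
have slack_gt0 k : 0 < slack k.
  rewrite /slack; case: eqP => [_|/eqP /z_strict /andP [lo hi]]; first exact: ltr01.
  by rewrite lt_min subr_gt0 hi -ltrBlDr sub0r lo.
have [t1 [/andP [t1_gt0 t1_le1] t1_pos]] := exists_small_scale (fun i => z i 0) g_gt0.
have [t2 [/andP [t2_gt0 _] t2_box]] :=
  exists_small_scale (fun k => (V *m z) k 0) slack_gt0.
set t := Num.min t1 t2.
have t_gt0 : 0 < t by rewrite lt_min t1_gt0 t2_gt0.
exists t; split; first by rewrite t_gt0 ge_min t1_le1.
split.
- move=> i; rewrite mxBE mxZE subr_ge0.
  have t_le : t * `|z i 0| <= t1 * `|z i 0| by rewrite ler_wpM2r // ge_min lexx.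
  by apply/ltW/(le_lt_trans (ler_norm _)); rewrite normrM gtr0_norm //;
    apply: le_lt_trans t_le (t1_pos i).
- by rewrite sumvB sumvZ sumz0 mulr0 subr0.
- move=> k; have -> : (V *m (d - (g - t *: z))) k 0 = u k + t * (V *m z) k 0.
    by rewrite opprB addrCA addrC mulmxDr mxDE -scalemxAr mxZE.
  have := t2_box k; rewrite /slack.
  case: eqP => [-> _|/eqP Vz0]; first by rewrite mulr0 addr0 g_box.
  rewrite lt_min => /andP [hi lo].
  have tVz : `|t * (V *m z) k 0| <= t2 * `|(V *m z) k 0|.
    by rewrite normrM gtr0_norm // ler_wpM2r // ge_min lexx orbT.
  have := ler_norm (t * (V *m z) k 0); have := ler_norm (- (t * (V *m z) k 0)).
  rewrite normrN -/(a k) => ? ?; apply/andP; split; lra.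
Qed.

Lemma is_gstar_descent_eq0 (g z : 'cV[R]_n) (t : R) :
  is_gstar V lam d g -> 0 < t <= 1 -> feasible V lam d (g - t *: z) ->
  dot g z = dot z z -> z = 0.
Proof.
move=> [_ g_min] /andP [t_gt0 t_le1] /g_min + gz.
rewrite !objectiveE ler_pM2l ?invr_gt0 ?ltr0n //.
have -> : dot (g - t *: z) (g - t *: z) = dot g g - t * (2 - t) * dot z z.
  by rewrite !(dotBl, dotBr, dotZl, dotZr) (dotC z g) gz; ring.
move=> descent; apply: dot_eq0; apply/eqP; rewrite eq_le dot_ge0 andbT.
by rewrite -(pmulr_rle0 _ (_ : 0 < t * (2 - t))) ?mulr_gt0 //; lra.
Qed.

End Perturbation.

Section ActiveSet.
Variables (R : realType) (n m : nat) (V : 'M[R]_(m, n)) (lam : R) (d : 'cV[R]_n).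

Local Notation g := (gstar V lam d).
Local Notation I := (Istar V lam d).
Local Notation e := (const_mx 1 : 'cV[R]_n).

Lemma mem_I1of_Istar k : (k \in I1of I) = ((V *m g) k 0 == (1 - lam) * (V *m d) k 0).
Proof.
rewrite inE inE.
have k1 : (inord k.+1 : 'I_(2 * m).+1) = k.+1 :> nat.
  by rewrite inordK //; have := ltn_ord k; lia.
apply/asboolP/eqP; rewrite /in_H k1 /= ltn_ord.
  by case=> k' [k'k]; have -> : k' = k by apply: val_inj.
by exists k.
Qed.

Lemma mem_I2of_Istar k : (k \in I2of I) = ((V *m g) k 0 == (1 + lam) * (V *m d) k 0).
Proof.
rewrite inE inE.
have k2 : (inord (m + k.+1) : 'I_(2 * m).+1) = (m + k.+1)%N :> nat.
  by rewrite inordK //; have := ltn_ord k; lia.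
have [k2_neq0 k2_gtm] : (m + k.+1 == 0)%N = false /\ (m + k.+1 <= m)%N = false.
  by split; lia.
apply/asboolP/eqP; rewrite /in_H k2 k2_neq0 k2_gtm addKn.
  by case=> k' [k'k]; have -> : k' = k by apply: val_inj.
by exists k.
Qed.

Lemma rows_of_mulE (S : {set 'I_m}) (x : 'cV[R]_n) r :
  (rows_of V S *m x) r 0 = (V *m x) (enum_val r) 0.
Proof. by rewrite !mxE; apply: eq_bigr => j _; rewrite mxE. Qed.

Lemma rows_of_mul_eq0 (S : {set 'I_m}) (x : 'cV[R]_n) k :
  rows_of V S *m x = 0 -> k \in S -> (V *m x) k 0 = 0.
Proof.
move=> /matrixP Sx0 kS; have := Sx0 (enum_rank_in kS k) 0.
by rewrite rows_of_mulE (enum_rankK_in kS kS) => ->; rewrite mxE.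
Qed.

Hypotheses (n_gt0 : (0 < n)%N) (Ve : V *m e = 0) (g_opt : is_gstar V lam d g).

(* [A_I d] is the orthogonal projection of [d] onto the affine space of vectors of the same
   sum that satisfy the hyperplane equations of [I]; [g] lies in that space when [I = I*(d)]. *)
Lemma A_Istar_residual (z := g - A_I V lam I *m d) :
  [/\ rows_of V (I1of I) *m z = 0, rows_of V (I2of I) *m z = 0,
      sumv z = 0 & dot (A_I V lam I *m d) z = 0].
Proof.
set V1 := rows_of V (I1of I); set V2 := rows_of V (I2of I); set W := col_mx V1 V2.
have Wg : W *m g = col_mx ((1 - lam) *: V1) ((1 + lam) *: V2) *m d.
  rewrite !mul_col_mx -!scalemxAl; congr col_mx; apply/matrixP => r j;
    rewrite ord1 [RHS]mxE !rows_of_mulE; apply/eqP.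
    by rewrite -mem_I1of_Istar enum_valP.
  by rewrite -mem_I2of_Istar enum_valP.
have We : W *m e = 0.
  rewrite mul_col_mx; apply/eqP; rewrite col_mx_eq0; apply/andP; split;
    by apply/eqP/matrixP => r j; rewrite ord1 rows_of_mulE Ve !mxE.
set p := A_I V lam I *m d.
have pE : p = (sumv d / n%:R) *: e + W^T *m (pinv (W *m W^T) *m (W *m g)).
  by rewrite /p mulmxDl -scalemxAl const_mx_mulmx scalerA mulrC Wg !mulmxA.
have Wz : W *m z = 0.
  by rewrite /z -/p pE mulmxBr mulmxDr -scalemxAr We scaler0 add0r !mulmxA gram_pinvK subrr.
have [[_ sumg _] _] := g_opt.
have n0 : (n%:R : R) != 0 by rewrite pnatr_eq0 -lt0n.
have sumz : sumv z = 0.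
  rewrite /z -/p sumvB sumg pE sumvD sumvZ sumv_const mulfVK // [sumv (_ *m _)]sumvE.
  by rewrite -dot_mulmx trmxK We dot0l addr0 subrr.
split=> //.
- by move/eqP: Wz; rewrite mul_col_mx col_mx_eq0 => /andP [/eqP].
- by move/eqP: Wz; rewrite mul_col_mx col_mx_eq0 => /andP [_ /eqP].
- by rewrite -/p pE dotDl dotZl -sumvE sumz mulr0 add0r dot_mulmx Wz dot0r.
Qed.

Hypothesis Vd_ge0 : forall k, 0 <= (V *m d) k 0.

Lemma Istar_inactive_strict (z : 'cV[R]_n) k :
  rows_of V (I1of I) *m z = 0 -> rows_of V (I2of I) *m z = 0 ->
  (V *m z) k 0 != 0 -> box_strict V lam d g k.
Proof.
move=> V1z V2z Vz0.
have k1 : k \notin I1of I by apply: contra Vz0 => /(rows_of_mul_eq0 V1z) ->.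
have k2 : k \notin I2of I by apply: contra Vz0 => /(rows_of_mul_eq0 V2z) ->.
move: k1 k2; rewrite mem_I1of_Istar mem_I2of_Istar => k1 k2.
have [[_ _ /(_ k) /andP [lo hi]] _] := g_opt.
rewrite /box_strict !lt_neqAle lo hi !andbT.
have absE : absv (V *m d) k 0 = (V *m d) k 0 by rewrite absvE ger0_norm.
rewrite absE mulmxBr mxBE; apply/andP; split.
  by apply: contra k2 => /eqP k2; apply/eqP; lra.
by apply: contra k1 => /eqP k1; apply/eqP; lra.
Qed.

Hypothesis g_gt0 : forall i, 0 < g i 0.

(* Otherwise [g] could be improved by moving it towards [A_I d] within the feasible set. *)
Lemma A_Istar_mul : A_I V lam I *m d = g.
Proof.
have [V1z V2z sumz pz] := A_Istar_residual.
set z := g - _ in V1z V2z sumz pz.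
have [t [t_range feas_t]] : exists t : R, 0 < t <= 1 /\ feasible V lam d (g - t *: z).
  apply: feasible_perturb => //; first by case: g_opt.
  by move=> k; apply: Istar_inactive_strict.
suff /eqP : z = 0 by rewrite subr_eq0 => /eqP.
apply: is_gstar_descent_eq0 g_opt t_range feas_t _.
by rewrite -[in LHS](subrK (A_I V lam I *m d) g) -/z dotDl pz addr0.
Qed.

End ActiveSet.

Section Injection.
Variables (R : realType) (n m : nat) (n_gt0 : (0 < n)%N) (tl hd : 'I_m -> 'I_n).
Variables (lam : R) (gam : 'cV[R]_n).
Hypotheses (G : simple_connected_graph tl hd) (lam_gt0 : 0 < lam) (lam_lt1 : lam < 1)
  (gam_Gamma : in_Gamma (Ordinal n_gt0) gam).

Local Notation i1 := (Ordinal n_gt0).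
Local Notation C := (incidence R tl hd).
Local Notation V := (PTDF C).
Local Notation e1 := (unitv R i1).
Local Notation e := (const_mx 1 : 'cV[R]_n).

Definition injection_bound : R := \sum_k (`|(V *m e1) k 0| + `|(V *m gam) k 0|).

Lemma injection_bound_ge0 : 0 <= injection_bound.
Proof. by apply: sumr_ge0 => k _; rewrite addr_ge0. Qed.

Local Notation inj eps := (e1 + eps *: gam).
(* Feasible because [V e = 0] makes [V (d - prop_dispatch eps) = lam V d]. *)
Local Notation prop_dispatch eps :=
  ((1 - lam) *: inj eps + (lam * (1 + eps) / n%:R) *: e).

Section SmallInjection.
Variable eps : R.
Hypotheses (eps_ge0 : 0 <= eps) (eps_le1 : eps <= 1).

Local Notation d := (inj eps).
Local Notation g := (gstar V lam d).
Local Notation g_prop := (prop_dispatch eps).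

Hypothesis Vd_ge0 : forall k, 0 <= (V *m d) k 0.

Lemma injection_entry i : d i 0 = (i == i1)%:R + eps * gam i 0.
Proof. by rewrite mxDE mxZE unitvE. Qed.

Lemma injection_entry_ge0 i : 0 <= d i 0.
Proof. by have [_ gam_ge0 _] := gam_Gamma; rewrite injection_entry addr_ge0 ?mulr_ge0. Qed.

Lemma lam_div_n_le_prop i : lam / n%:R <= g_prop i 0.
Proof.
rewrite mxDE !mxZE const_mxE mulr1 -[X in X <= _]add0r lerD ?mulr_ge0 ?injection_entry_ge0 //.
  by rewrite subr_ge0 ltW.
by rewrite ler_wpM2r ?invr_ge0 ?ler0n // ler_peMr ?lerDl // ltW.
Qed.

Lemma feasible_prop : feasible V lam d g_prop.
Proof.
have [_ _ sum_gam] := gam_Gamma.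
have n0 : (n%:R : R) != 0 by rewrite pnatr_eq0 -lt0n.
split.
- move=> i; apply: le_trans (lam_div_n_le_prop i).
  by rewrite divr_ge0 ?ler0n // ltW.
- have sum_d : sumv d = 1 + eps by rewrite sumvD sumvZ sumv_unitv sum_gam mulr1.
  by rewrite sum_d sumvD !sumvZ sumv_const sum_d mulfVK //; ring.
- move=> k; have -> : d - g_prop = lam *: d - (lam * (1 + eps) / n%:R) *: e.
    by apply/matrixP => i j; rewrite !mxE; ring.
  rewrite mulmxBr -!scalemxAr PTDF_const scaler0 subr0 mxZE absvE ger0_norm //.
  have Vd := Vd_ge0 k; have lam0 := lam_gt0.
  by apply/andP; split; nra.
Qed.

Lemma is_gstar_injection : is_gstar V lam d g.
Proof. by apply: gstar_spec; exists g_prop; exact: feasible_prop. Qed.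

(* The flows [V (g - g_prop)] stay in [[0, 2 lam V d]], while the injection [C d] is at most
   [eps] at every edge except those entering node [i1], whose flow [V e1] is nonpositive by the
   maximum principle. *)
Lemma incidence_flow_lower_bound k :
  - ((C *m d) k 0 * (V *m (g - g_prop)) k 0)
    <= 2 * eps * (`|(V *m e1) k 0| + `|(V *m gam) k 0|).
Proof.
have [[_ _ g_box] _] := is_gstar_injection.
move: (g_box k); rewrite absvE ger0_norm // mulmxBr mxBE => /andP [lo hi].
have [gam_i1 gam_ge0 sum_gam] := gam_Gamma.
set w := (V *m (g - g_prop)) k 0.
have wE : w = (V *m g) k 0 - (1 - lam) * (V *m d) k 0.
  by rewrite /w mulmxBr mulmxDr -!scalemxAr PTDF_const scaler0 addr0 mxBE mxZE.
have Vd := Vd_ge0 k.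
have w_ge0 : 0 <= w by rewrite wE; lra.
have w_le : w <= 2 * (V *m d) k 0.
  have : lam * (V *m d) k 0 <= (V *m d) k 0 by rewrite ler_piMl // ltW.
  by rewrite wE; lra.
have VdE : (V *m d) k 0 = (V *m e1) k 0 + eps * (V *m gam) k 0.
  by rewrite mulmxDr mxDE -scalemxAr mxZE.
have dtl_w : 0 <= d (tl k) 0 * w by rewrite mulr_ge0 ?injection_entry_ge0.
rewrite incidence_mulE -/w mulrBl opprB.
case: (eqVneq (hd k) i1) => hd_k.
  have Ve1_le0 : (V *m e1) k 0 <= 0 by apply: PTDF_unitv_hd_le0.
  have -> : d (hd k) 0 = 1 by rewrite injection_entry hd_k eqxx gam_i1 mulr0 addr0.
  have : eps * (V *m gam) k 0 <= eps * `|(V *m gam) k 0| by rewrite ler_wpM2l ?ler_norm.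
  have : 0 <= eps * `|(V *m e1) k 0| by rewrite mulr_ge0.
  by rewrite VdE in w_le; lra.
have d_hd_le : d (hd k) 0 <= eps.
  rewrite injection_entry (negbTE hd_k) add0r ler_piMr //.
  rewrite -sum_gam /sumv (bigD1 (hd k)) //= lerDl.
  by apply: sumr_ge0 => i _; apply: gam_ge0.
have w_le' : w <= 2 * (`|(V *m e1) k 0| + `|(V *m gam) k 0|).
  have : eps * (V *m gam) k 0 <= `|(V *m gam) k 0|.
    apply: le_trans (ler_norm (eps * (V *m gam) k 0)) _.
    by rewrite normrM ger0_norm // ler_piMl.
  by have := ler_norm ((V *m e1) k 0); rewrite VdE in w_le; lra.
have : d (hd k) 0 * w <= eps * w by rewrite ler_wpM2r.
have : eps * w <= eps * (2 * (`|(V *m e1) k 0| + `|(V *m gam) k 0|)) by rewrite ler_wpM2l.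
lra.
Qed.

Lemma gstar_sub_prop_sqr : dot (g - g_prop) (g - g_prop) <= 4 * eps * injection_bound.
Proof.
set u := g - g_prop.
have [[_ sum_g _] g_min] := is_gstar_injection.
have [_ sum_prop _] := feasible_prop.
have sum_u : sumv u = 0 by rewrite sumvB sum_g sum_prop subrr.
have opt : dot g g <= dot g_prop g_prop.
  by have := g_min _ feasible_prop; rewrite !objectiveE ler_pM2l ?invr_gt0 ?ltr0n.
have gE : g = g_prop + u by rewrite /u subrKC.
have cross : dot g_prop u = (1 - lam) * dot (C *m d) (V *m u).
  rewrite dotDl !dotZl -sumvE sum_u mulr0 addr0.
  by rewrite dot_incidence_PTDF.
have flow : - dot (C *m d) (V *m u) <= 2 * eps * injection_bound.
  rewrite /dot -sumrN /injection_bound mulr_sumr; apply: ler_sum => k _.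
  exact: incidence_flow_lower_bound.
have expand : dot g g = dot g_prop g_prop + 2 * dot g_prop u + dot u u.
  by rewrite {1 2}gE dot_sqrD.
have lam' : 0 <= 1 - lam <= 1 by rewrite subr_ge0 ltW // gerBl ltW.
have epsK : 0 <= 2 * eps * injection_bound by rewrite !mulr_ge0 ?injection_bound_ge0.
have : (1 - lam) * - dot (C *m d) (V *m u) <= 2 * eps * injection_bound.
  case/andP: lam' => lam'0 lam'1.
  by apply: le_trans (ler_wpM2l lam'0 flow) _; rewrite ler_piMl.
by move: opt; rewrite expand cross; lra.
Qed.

Lemma gstar_gt0 : (forall i, `|(g - g_prop) i 0| < lam / n%:R) -> forall i, 0 < g i 0.
Proof.
move=> close i; have := close i; have := lam_div_n_le_prop i.
rewrite mxBE; have := ler_norm (- (g i 0 - g_prop i 0)); rewrite normrN.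
by move=> *; lra.
Qed.

Lemma A_Istar_unitv_dev (g_gt0 : forall i, 0 < g i 0) i :
  `|(A_I V lam (Istar V lam d) *m e1 - ((1 - lam) *: e1 + (lam / n%:R) *: e)) i 0|
    <= `|(g - g_prop) i 0| + eps * (2 + `|(A_I V lam (Istar V lam d) *m gam) i 0|).
Proof.
have [_ gam_ge0 sum_gam] := gam_Gamma.
set A := A_I V lam (Istar V lam d).
have Ad : A *m d = g.
  exact: A_Istar_mul n_gt0 (PTDF_const R tl hd) is_gstar_injection Vd_ge0 g_gt0.
have -> : (A *m e1 - ((1 - lam) *: e1 + (lam / n%:R) *: e)) i 0 =
    (g - g_prop) i 0 + eps * ((1 - lam) * gam i 0 + lam / n%:R - (A *m gam) i 0).
  by rewrite -Ad mulmxDr -scalemxAr !(mxBE, mxDE, mxNE, mxZE) !const_mxE; ring.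
have gam_le1 : gam i 0 <= 1.
  by rewrite -sum_gam /sumv (bigD1 i) //= lerDl; apply: sumr_ge0 => j _; apply: gam_ge0.
have lam_n : lam / n%:R <= 1.
  by rewrite ler_pdivrMr ?ltr0n // mul1r (le_trans (ltW lam_lt1)) // ler1n.
have coef : `|(1 - lam) * gam i 0 + lam / n%:R - (A *m gam) i 0|
    <= 2 + `|(A *m gam) i 0|.
  apply: le_trans (ler_normB _ _) _; rewrite lerD2r ger0_norm.
    by have := mulr_ge0 (ltW lam_gt0) (gam_ge0 i); rewrite mulrBl mul1r; lra.
  by rewrite addr_ge0 ?mulr_ge0 ?divr_ge0 ?ler0n ?gam_ge0 // ?subr_ge0 ltW.
apply: le_trans (ler_normD _ _) _; rewrite lerD2l normrM ger0_norm //.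
by rewrite ler_wpM2l.
Qed.

End SmallInjection.

Lemma gstar_close (eta : R) : 0 < eta ->
  exists2 eps1 : R, 0 < eps1 & forall eps, 0 <= eps < eps1 ->
    (forall k, 0 <= (V *m inj eps) k 0) ->
    forall i, `|(gstar V lam (inj eps) - prop_dispatch eps) i 0| < eta.
Proof.
move=> eta_gt0; have K_ge0 := injection_bound_ge0.
have K1_gt0 : 0 < 4 * injection_bound + 1 by rewrite ltr_wpDl ?mulr_ge0.
exists (Num.min 1 (eta ^+ 2 / (4 * injection_bound + 1))).
  by rewrite lt_min ltr01 divr_gt0 ?exprn_gt0.
move=> eps /andP [eps_ge0]; rewrite lt_min => /andP [/ltW eps_le1].
rewrite ltr_pdivlMr // => eps_small Vd_ge0 i.
set u := gstar V lam (inj eps) - prop_dispatch eps.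
have := le_trans (sqr_le_dot u i) (gstar_sub_prop_sqr eps_ge0 eps_le1 Vd_ge0).
rewrite -(real_normK (num_real (u i 0))) => u_sqr.
rewrite ltNge; apply/negP => eta_le.
have : 0 <= eps * injection_bound by rewrite mulr_ge0.
by nra.
Qed.

End Injection.

Theorem mainTheorem6 (R : realType) (n m : nat) (hn : (0 < n)%N)
    (tl hd : 'I_m -> 'I_n) (lam : R) :
  simple_connected_graph tl hd ->
  0 < lam < 1 ->
  let V := PTDF (incidence R tl hd) in
  let e1 := unitv R (Ordinal hn) in
  forall gam : 'cV[R]_n, in_Gamma (Ordinal hn) gam ->
  exists eps0 : R, 0 < eps0 /\
    forall eps : R, 0 <= eps < eps0 ->
      let d := e1 + eps *: gam in
      (forall k, 0 <= (V *m d) k 0) ->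
      A_I V lam (Istar V lam d) *m e1
        = (1 - lam) *: e1 + (lam / n%:R) *: const_mx 1.
Proof.
move=> G /andP [lam_gt0 lam_lt1] V e1 gam gam_Gamma.
set g0 := (1 - lam) *: e1 + _ *: _.
pose dev (p : {set 'I_(2 * m).+1} * 'I_n) := (A_I V lam p.1 *m e1 - g0) p.2 0.
have [del del_gt0 gap] := exists_gap dev.
set M := \sum_(p : {set 'I_(2 * m).+1} * 'I_n) `|(A_I V lam p.1 *m gam) p.2 0|.
have M2_gt0 : 0 < M + 2 by rewrite ltr_wpDl ?sumr_ge0.
set eta := Num.min (lam / n%:R) (del / 2).
have eta_gt0 : 0 < eta by rewrite lt_min !divr_gt0 ?ltr0n.
have [eta_lam eta_del] : eta <= lam / n%:R /\ eta <= del / 2.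
  by rewrite !ge_min !lexx orbT.
have [eps1 eps1_gt0 close] := gstar_close G lam_gt0 lam_lt1 gam_Gamma eta_gt0.
exists (Num.min eps1 (del / 2 / (M + 2))).
split=> [|eps /andP [eps_ge0]]; first by rewrite lt_min eps1_gt0 !divr_gt0.
rewrite lt_min ltr_pdivlMr // => /andP [eps_lt1 eps_M] d Vd_ge0.
have u_small i := close eps (introT andP (conj eps_ge0 eps_lt1)) Vd_ge0 i.
have g_gt0 := gstar_gt0 lam_gt0 lam_lt1 gam_Gamma eps_ge0
  (fun i => lt_le_trans (u_small i) eta_lam).
apply/matrixP => i j; rewrite ord1; apply/eqP; rewrite -subr_eq0 -mxBE.
apply: contraT => /(gap (Istar V lam d, i)) del_le.
have := A_Istar_unitv_dev lam_gt0 lam_lt1 gam_Gamma eps_ge0 Vd_ge0 g_gt0 i.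
have : eps * (2 + `|(A_I V lam (Istar V lam d) *m gam) i 0|) <= eps * (M + 2).
  rewrite ler_wpM2l // addrC lerD2r.
  by rewrite /M (bigD1 (Istar V lam d, i)) //= lerDl sumr_ge0.
have := lt_le_trans (u_small i) eta_del.
by rewrite /dev /= in del_le; lra.
Qed.
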